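(* Let $n\ge3$, $t_1<\dots<t_n$, and for $j=1,\dots,n-1$ let $\xi_j\in\mathbb{R}$ and $\varphi_j=\Phi_{(\xi_j,-\xi_j)}$. Let $H_1,\dots,H_n$ be the associated generalized hat functions and $\mathcal{H}_n$ their span. Then the matrix $(s_{i,j})$ with $s_{i,j}=\int_{t_1}^{t_n}H_i(t)H_j(t)\,dt$ is row diagonally dominant, and the orthogonal projection $P^{\mathcal{H}_n}$ (for the unweighted $L^2$ inner product on $[t_1,t_n]$) satisfies $\|P^{\mathcal{H}_n}\|_{op}\le4$.
   Context: $\Phi_{(\xi,-\xi)}(t)=\frac{\sinh(\xi t)}{\xi}$ for $\xi\ne0$ and $\Phi_{(0,0)}(t)=t$. Generalized hat functions: for $2\le j\le n-1$, $H_j(t)=\frac{\varphi_{j-1}(t-t_{j-1})}{\varphi_{j-1}(t_j-t_{j-1})}$ on $[t_{j-1},t_j]$, $H_j(t)=\frac{\varphi_j(t-t_{j+1})}{\varphi_j(t_j-t_{j+1})}$ on $[t_j,t_{j+1}]$, $0$ elsewhere; $H_1=\frac{\varphi_1(t-t_2)}{\varphi_1(t_1-t_2)}$ on $[t_1,t_2]$, $0$ elsewhere; $H_n=\frac{\varphi_{n-1}(t-t_{n-1})}{\varphi_{n-1}(t_n-t_{n-1})}$ on $[t_{n-1},t_n]$, $0$ elsewhere. $\|P^{\mathcal{H}_n}\|_{op}=\sup_{f\ne0}\|P^{\mathcal{H}_n}f\|_\infty/\|f\|_\infty$ on $C[t_1,t_n]$. Row diagonally dominant: there is $c\in(0,1)$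 with $|s_{j-1,j}|+|s_{j,j+1}|\le c|s_{j,j}|$ for all $j$, where $s_{0,1}=s_{n,n+1}=0$. *)

From Stdlib Require Import Reals.
From Coquelicot Require Import Coquelicot.
Open Scope R_scope.

Definition Phi (xi x : R) : R :=
  if Req_EM_T xi 0 then x else sinh (xi * x) / xi.

(* Knots t_1 < ... < t_n (1-based, t : nat -> R), parameters xi_1..xi_{n-1},
   varphi_j = Phi (xi j).  Generalized hat function H_j, 1 <= j <= n. *)
Definition hat (n : nat) (t xi : nat -> R) (j : nat) (x : R) : R :=
  if (andb (Nat.leb 2 j) (andb ((if Rle_dec (t (j - 1)%nat) x then true else false)) ((if Rle_dec x (t j) then true else false))))
  then Phi (xi (j - 1)%nat) (x - t (j - 1)%nat) / Phi (xi (j - 1)%nat) (t j - t (j - 1)%nat)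
  else if (andb (Nat.leb (S j) n) (andb ((if Rle_dec (t j) x then true else false)) ((if Rle_dec x (t (S j)) then true else false))))
  then Phi (xi j) (x - t (S j)) / Phi (xi j) (t j - t (S j))
  else 0.

Definition gram (n : nat) (t xi : nat -> R) (i j : nat) : R :=
  RInt (fun x => hat n t xi i x * hat n t xi j x) (t 1%nat) (t n).

(* Row diagonal dominance with the convention s_{0,1} = s_{n,n+1} = 0. *)
Definition row_diag_dominant (n : nat) (s : nat -> nat -> R) : Prop :=
  exists c : R, 0 < c < 1 /\
    forall j : nat, (1 <= j <= n)%nat ->
      (if Nat.eqb j 1 then 0 else Rabs (s (j - 1)%nat j))
      + (if Nat.eqb j n then 0 else Rabs (s j (S j)))
      <= c * Rabs (s j j).

Definition cont_on (a b : R) (f : R -> R) : Prop :=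
  forall x, a <= x <= b ->
    filterlim f (within (fun y => a <= y <= b) (locally x)) (locally (f x)).

(* g = P^{H_n} f : g lies in span{H_1..H_n} and f - g is L^2[t_1,t_n]-orthogonal
   to every H_i. *)
Definition is_hat_proj (n : nat) (t xi : nat -> R) (f g : R -> R) : Prop :=
  (exists a : nat -> R, forall x, g x = sum_n_m (fun i => a i * hat n t xi i x) 1 n)
  /\ forall i : nat, (1 <= i <= n)%nat ->
       RInt (fun x => (f x - g x) * hat n t xi i x) (t 1%nat) (t n) = 0.

From Stdlib Require Import Reals Lra Psatz Lia FunctionalExtensionality.
From Coquelicot Require Import Coquelicot.
Open Scope R_scope.
Set Bullet Behavior "Strict Subproofs".

(* On each piece [t k, t (k+1)] exactly two hats are nonzero: H (k+1) rises as
   u = Phi (x - t k) / Phi (t (k+1) - t k), and H k falls as the mirror image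
   u (t k + t (k+1) - x) (Phi is odd).  Everything rests on four properties of
   such a rising profile u on [a, b] (the record [hat_profile]): 0 <= u,
   u + mirror <= 1, 2 int u*mirror <= int u^2 and int u <= 2 int u^2.  For
   xi <> 0 they reduce, via closed-form integrals of sinh, to the inequalities
   y <= sinh y <= y cosh y and y (2 cosh y + 1) <= sinh y (cosh y + 2); for
   xi = 0 the profile is linear.  By mirror symmetry the Gram matrix is
   tridiagonal with rows satisfying 2 (lower + upper) <= diag, which is the
   first claim.  The projection's coefficients solve the tridiagonal normal
   equations (solvable by elimination); their right-hand sides are bounded by
   2 M diag, so a maximum principle bounds every coefficient by 4 M, and on
   each piece the projection is a combination of two coefficients with
   nonnegative weights of sum <= 1. *)

Lemma nondecreasing_from_0 (F dF : R -> R) :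
  (forall x, is_derive F x (dF x)) -> (forall x, 0 <= x -> 0 <= dF x) ->
  forall y, 0 <= y -> F 0 <= F y.
Proof.
  intros HF HdF y Hy.
  destruct (Req_dec y 0) as [->|Hy0]; [lra|].
  destruct (MVT_gen F 0 y dF) as [c [Hc Hmvt]].
  - intros x _; apply HF.
  - intros x _. apply continuity_pt_filterlim.
    apply (ex_derive_continuous (K := R_AbsRing) (V := R_NormedModule)).
    eexists; apply HF.
  - rewrite Rmin_left, Rmax_right in Hc by lra.
    assert (0 <= dF c) by (apply HdF; lra). nra.
Qed.

Lemma cosh_minus_1 y : cosh y - 1 = (exp y - 1) ^ 2 / (2 * exp y).
Proof.
  unfold cosh. rewrite exp_Ropp. assert (0 < exp y) by apply exp_pos. field; lra.
Qed.

Lemma cosh_ge_1 y : 1 <= cosh y.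
Proof.
  enough (0 <= cosh y - 1) by lra.
  rewrite cosh_minus_1. assert (0 < exp y) by apply exp_pos.
  apply Rmult_le_pos; [apply pow2_ge_0 | apply Rlt_le, Rinv_0_lt_compat; lra].
Qed.

Lemma cosh_gt_1 y : 0 < y -> 1 < cosh y.
Proof.
  intros Hy. assert (1 < exp y) by (pose proof (exp_ineq1 y); lra).
  enough (0 < cosh y - 1) by lra.
  rewrite cosh_minus_1. apply Rdiv_lt_0_compat; nra.
Qed.

(* The three inequalities between y, sinh y and cosh y (y >= 0) behind the
   integral estimates; each follows by monotonicity from its value at 0. *)
Lemma id_le_sinh y : 0 <= y -> y <= sinh y.
Proof.
  intros Hy.
  enough (0 - 0 <= sinh y - y) by lra.
  rewrite <- sinh_0 at 1.
  apply (nondecreasing_from_0 (fun y => sinh y - y) (fun y => cosh y - 1)); auto.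
  - intros x. unfold sinh, cosh. auto_derive; auto. lra.
  - intros x _. pose proof (cosh_ge_1 x). lra.
Qed.

Lemma sinh_nonneg y : 0 <= y -> 0 <= sinh y.
Proof. intros Hy. pose proof (id_le_sinh y Hy). lra. Qed.

Lemma sinh_le_id_cosh y : 0 <= y -> sinh y <= y * cosh y.
Proof.
  intros Hy.
  enough (0 * cosh 0 - sinh 0 <= y * cosh y - sinh y) by (rewrite sinh_0 in *; lra).
  apply (nondecreasing_from_0 (fun y => y * cosh y - sinh y) (fun y => y * sinh y)); auto.
  - intros x. unfold sinh, cosh. auto_derive; auto. field.
  - intros x Hx. apply Rmult_le_pos; auto. apply sinh_nonneg; auto.
Qed.

Lemma hyperbolic_key y : 0 <= y -> y * (2 * cosh y + 1) <= sinh y * (cosh y + 2).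
Proof.
  intros Hy.
  enough (sinh 0 * (cosh 0 + 2) - 0 * (2 * cosh 0 + 1)
          <= sinh y * (cosh y + 2) - y * (2 * cosh y + 1)) by (rewrite sinh_0 in *; lra).
  apply (nondecreasing_from_0 (fun y => sinh y * (cosh y + 2) - y * (2 * cosh y + 1))
                              (fun y => 2 * sinh y * (sinh y - y))); auto.
  - intros x. unfold sinh, cosh. auto_derive; auto.
    rewrite !exp_Ropp. assert (0 < exp x) by apply exp_pos. field. lra.
  - intros x Hx. pose proof (id_le_sinh x Hx). pose proof (sinh_nonneg x Hx). nra.
Qed.

Lemma sinh_opp y : sinh (- y) = - sinh y.
Proof. unfold sinh. rewrite Ropp_involutive. field. Qed.

Lemma sinh_add p q : sinh (p + q) = sinh p * cosh q + cosh p * sinh q.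
Proof. unfold sinh, cosh. rewrite Ropp_plus_distr, !exp_plus. field. Qed.

Lemma sinh_superadditive p q : 0 <= p -> 0 <= q -> sinh p + sinh q <= sinh (p + q).
Proof.
  intros Hp Hq. rewrite sinh_add.
  pose proof (cosh_ge_1 p). pose proof (cosh_ge_1 q).
  pose proof (sinh_nonneg p Hp). pose proof (sinh_nonneg q Hq). nra.
Qed.

Lemma continuous_of_derivable (f : R -> R) : (forall x, ex_derive f x) -> forall x, continuous f x.
Proof.
  intros Hf x. apply (ex_derive_continuous (K := R_AbsRing) (V := R_NormedModule)), Hf.
Qed.

Lemma continuous_product (f g : R -> R) : (forall x, continuous f x) -> (forall x, continuous g x) ->
  forall x, continuous (fun y => f y * g y) x.
Proof. intros Hf Hg x. apply (continuous_mult f g); auto. Qed.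

Lemma continuous_affine_comp (g : R -> R) c d : (forall x, continuous g x) ->
  forall x, continuous (fun x => g (c * x + d)) x.
Proof.
  intros Hg x. apply (continuous_comp (fun x => c * x + d) g); auto.
  apply continuous_of_derivable. intros. auto_derive; auto.
Qed.

Lemma ex_RInt_cont (f : R -> R) a b : (forall x, continuous f x) -> ex_RInt f a b.
Proof. intros Hf. apply (ex_RInt_continuous (V := R_CompleteNormedModule)); auto. Qed.

Lemma RInt_ext_eq (f g : R -> R) a b : (forall x, f x = g x) -> RInt f a b = RInt g a b :> R.
Proof. intros H. apply RInt_ext. intros; apply H. Qed.

Lemma RInt_scale (f : R -> R) c a b : (forall x, continuous f x) ->
  RInt (fun x => c * f x) a b = c * RInt f a b :> R.
Proof. intros Hf. apply (RInt_scal f a b c), ex_RInt_cont, Hf. Qed.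

Lemma RInt_antiderivative (F f : R -> R) a b :
  (forall x, is_derive F x (f x)) -> (forall x, ex_derive f x) ->
  RInt f a b = F b - F a :> R.
Proof.
  intros HF Hf. apply is_RInt_unique, (is_RInt_derive F f a b).
  - intros; apply HF.
  - intros; apply continuous_of_derivable, Hf.
Qed.

Lemma RInt_reflect (g : R -> R) a b : (forall x, continuous g x) ->
  RInt (fun x => g (a + b - x)) a b = RInt g a b.
Proof.
  intros Hg.
  assert (E := RInt_comp_lin g (-1) (a + b) a b (ex_RInt_cont g _ _ Hg)).
  replace (-1 * a + (a + b)) with b in E by ring.
  replace (-1 * b + (a + b)) with a in E by ring.
  rewrite <- (opp_RInt_swap g) in E by (apply ex_RInt_cont; auto).
  rewrite <- (opp_opp (RInt g a b)), <- E, <- RInt_opp.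
  - apply RInt_ext. intros x _. unfold scal, opp; simpl. unfold mult; simpl.
    replace (-1 * x + (a + b)) with (a + b - x) by ring. ring.
  - apply (ex_RInt_ext (fun x => - g (-1 * x + (a + b)))).
    + intros x _. unfold scal; simpl. unfold mult; simpl. ring.
    + apply ex_RInt_cont. intros x. apply (continuous_opp (fun x => g (-1 * x + (a + b)))).
      apply continuous_affine_comp; auto.
Qed.

Lemma sinh_affine_exp xi x a :
  sinh (xi * (x - a)) = (exp (xi * x) / exp (xi * a) - exp (xi * a) / exp (xi * x)) / 2.
Proof.
  unfold sinh. replace (xi * (x - a)) with (xi * x + - (xi * a)) by ring.
  replace (- (xi * x + - (xi * a))) with (xi * a + - (xi * x)) by ring.
  rewrite !exp_plus, !exp_Ropp. reflexivity.
Qed.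

Lemma cosh_affine_exp xi a b :
  cosh (xi * (b - a)) = (exp (xi * b) / exp (xi * a) + exp (xi * a) / exp (xi * b)) / 2.
Proof.
  unfold cosh. replace (xi * (b - a)) with (xi * b + - (xi * a)) by ring.
  replace (- (xi * b + - (xi * a))) with (xi * a + - (xi * b)) by ring.
  rewrite !exp_plus, !exp_Ropp. reflexivity.
Qed.

Ltac pos_denominators :=
  repeat split; apply Rgt_not_eq;
  repeat (apply Rmult_lt_0_compat || apply pow_lt); auto; lra.

(* Writing E = exp (xi x), all integrands are
   Laurent polynomials in E, so explicit antiderivatives are available. *)
Section SinhIntegrals.
Variables xi a b : R.
Hypothesis Hxi : 0 < xi.

Lemma RInt_sinh :
  RInt (fun x => sinh (xi * (x - a))) a b = (cosh (xi * (b - a)) - 1) / xi :> R.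
Proof.
  assert (Ha := exp_pos (xi * a)). assert (Hb := exp_pos (xi * b)).
  rewrite (RInt_ext_eq _ (fun x => (exp (xi * x) / exp (xi * a) - exp (xi * a) / exp (xi * x)) / 2))
    by (intros; apply sinh_affine_exp).
  rewrite (RInt_antiderivative
             (fun x => (exp (xi * x) / (xi * exp (xi * a)) + exp (xi * a) / (xi * exp (xi * x))) / 2)).
  - rewrite cosh_affine_exp. field. pos_denominators.
  - intros x. assert (Hx := exp_pos (xi * x)). auto_derive; [pos_denominators|]. field. pos_denominators.
  - intros x. assert (Hx := exp_pos (xi * x)). auto_derive. pos_denominators.
Qed.

Lemma RInt_sinh_sq :
  RInt (fun x => sinh (xi * (x - a)) * sinh (xi * (x - a))) a b
  = (sinh (xi * (b - a)) * cosh (xi * (b - a)) / xi - (b - a)) / 2 :> R.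
Proof.
  assert (Ha := exp_pos (xi * a)). assert (Hb := exp_pos (xi * b)).
  rewrite (RInt_ext_eq _ (fun x => ((exp (xi * x) / exp (xi * a) - exp (xi * a) / exp (xi * x)) / 2)
                               * ((exp (xi * x) / exp (xi * a) - exp (xi * a) / exp (xi * x)) / 2)))
    by (intros; rewrite sinh_affine_exp; reflexivity).
  rewrite (RInt_antiderivative
             (fun x => (exp (xi * x) ^ 2 / (2 * xi * exp (xi * a) ^ 2) - 2 * x
                        - exp (xi * a) ^ 2 / (2 * xi * exp (xi * x) ^ 2)) / 4)).
  - rewrite sinh_affine_exp, cosh_affine_exp. field. pos_denominators.
  - intros x. assert (Hx := exp_pos (xi * x)). auto_derive; [pos_denominators|]. field. pos_denominators.
  - intros x. assert (Hx := exp_pos (xi * x)). auto_derive. pos_denominators.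
Qed.

Lemma RInt_sinh_reflected_product :
  RInt (fun x => sinh (xi * (x - a)) * sinh (xi * (b - x))) a b
  = ((b - a) * cosh (xi * (b - a)) - sinh (xi * (b - a)) / xi) / 2 :> R.
Proof.
  assert (Ha := exp_pos (xi * a)). assert (Hb := exp_pos (xi * b)).
  rewrite (RInt_ext_eq _ (fun x => ((exp (xi * x) / exp (xi * a) - exp (xi * a) / exp (xi * x)) / 2)
                               * ((exp (xi * b) / exp (xi * x) - exp (xi * x) / exp (xi * b)) / 2)))
    by (intros; rewrite !sinh_affine_exp; reflexivity).
  rewrite (RInt_antiderivative
             (fun x => ((exp (xi * b) / exp (xi * a) + exp (xi * a) / exp (xi * b)) * x
                        - exp (xi * x) ^ 2 / (2 * xi * exp (xi * a) * exp (xi * b))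
                        + exp (xi * a) * exp (xi * b) / (2 * xi * exp (xi * x) ^ 2)) / 4)).
  - rewrite sinh_affine_exp, cosh_affine_exp. field. pos_denominators.
  - intros x. assert (Hx := exp_pos (xi * x)). auto_derive; [pos_denominators|]. field. pos_denominators.
  - intros x. assert (Hx := exp_pos (xi * x)). auto_derive. pos_denominators.
Qed.

End SinhIntegrals.

(* The rising half of a hat on [a, b]: continuous, from 0 at a to 1 at b,
   and together with its mirror image u (a + b - x) (the falling half of the
   next hat) a partition of at most unity on [a, b].  The integral conditions
   are what the diagonal dominance of the Gram matrix and the bound 4 on the
   projection need. *)
Record hat_profile (u : R -> R) (a b : R) : Prop := {
  profile_continuous : forall x, continuous u x;
  profile_left : u a = 0;
  profile_right : u b = 1;
  profile_bounds : forall x, a <= x <= b -> 0 <= u x /\ u x + u (a + b - x) <= 1;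
  profile_mass_pos : 0 < RInt (fun x => u x * u x) a b;
  profile_overlap_nonneg : 0 <= RInt (fun x => u x * u (a + b - x)) a b;
  profile_overlap_small :
    2 * RInt (fun x => u x * u (a + b - x)) a b <= RInt (fun x => u x * u x) a b;
  profile_integral : RInt u a b <= 2 * RInt (fun x => u x * u x) a b }.

Lemma sinh_profile_integrals xi a b : 0 < xi -> a < b ->
  let K := sinh (xi * (b - a)) in let D := 2 * xi * K ^ 2 in
  (RInt (fun x => sinh (xi * (x - a)) / K * (sinh (xi * (x - a)) / K)) a b
     = (K * cosh (xi * (b - a)) - xi * (b - a)) / D :> R) /\
  (RInt (fun x => sinh (xi * (x - a)) / K * (sinh (xi * (a + b - x - a)) / K)) a b
     = (xi * (b - a) * cosh (xi * (b - a)) - K) / D :> R) /\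
  (RInt (fun x => sinh (xi * (x - a)) / K) a b = 2 * K * (cosh (xi * (b - a)) - 1) / D :> R).
Proof.
  intros Hxi Hab K D. subst K D.
  assert (HK : 0 < sinh (xi * (b - a))) by (rewrite <- sinh_0; apply sinh_lt; nra).
  assert (Hcont : forall g : R -> R, (forall x, ex_derive g x) -> forall x, continuous g x)
    by apply continuous_of_derivable.
  split; [|split].
  - rewrite (RInt_ext_eq _ (fun x => / sinh (xi * (b - a)) ^ 2 * (sinh (xi * (x - a)) * sinh (xi * (x - a)))))
      by (intros; field; lra).
    rewrite RInt_scale by (apply Hcont; intros; unfold sinh; auto_derive; auto).
    rewrite RInt_sinh_sq by auto. field. split; lra.
  - rewrite (RInt_ext_eq _ (fun x => / sinh (xi * (b - a)) ^ 2 * (sinh (xi * (x - a)) * sinh (xi * (b - x)))))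
      by (intros; replace (a + b - x - a) with (b - x) by ring; field; lra).
    rewrite RInt_scale by (apply Hcont; intros; unfold sinh; auto_derive; auto).
    rewrite RInt_sinh_reflected_product by auto. field. split; lra.
  - rewrite (RInt_ext_eq _ (fun x => / sinh (xi * (b - a)) * sinh (xi * (x - a)))) by (intros; field; lra).
    rewrite RInt_scale by (apply Hcont; intros; unfold sinh; auto_derive; auto).
    rewrite RInt_sinh by auto. field. split; lra.
Qed.

(* xi > 0: the normalized sinh profile; the integral conditions are exactly the
   hyperbolic inequalities, and u + mirror <= 1 is the superadditivity of sinh. *)
Lemma sinh_profile xi a b : 0 < xi -> a < b ->
  hat_profile (fun x => sinh (xi * (x - a)) / sinh (xi * (b - a))) a b.
Proof.
  intros Hxi Hab.
  destruct (sinh_profile_integrals xi a b Hxi Hab) as (Emass & Eoverlap & Eint).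
  set (y := xi * (b - a)) in *. assert (Hy : 0 < y) by (unfold y; nra).
  set (K := sinh y) in *. set (c := cosh y) in *.
  assert (HK : y <= K) by (apply id_le_sinh; lra).
  assert (Hc : 1 < c) by (apply cosh_gt_1; lra).
  assert (Hyc : K <= y * c) by (apply sinh_le_id_cosh; lra).
  assert (Hkey : y * (2 * c + 1) <= K * (c + 2)) by (apply hyperbolic_key; lra).
  assert (HD : 0 < 2 * xi * K ^ 2) by (apply Rmult_lt_0_compat; [lra | apply pow_lt; lra]).
  split; cbv beta; fold y K.
  - apply continuous_of_derivable. intros x. unfold sinh at 1. auto_derive. auto.
  - rewrite Rminus_diag, Rmult_0_r, sinh_0. unfold Rdiv; ring.
  - field; lra.
  - intros x Hx. split.
    + apply Rdiv_le_0_compat; [apply sinh_nonneg; nra | lra].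
    + rewrite <- Rdiv_plus_distr. apply Rle_div_l; [lra|]. rewrite Rmult_1_l.
      unfold K, y. replace (xi * (b - a)) with (xi * (x - a) + xi * (a + b - x - a)) by ring.
      apply sinh_superadditive; nra.
  - rewrite Emass. apply Rdiv_lt_0_compat; nra.
  - rewrite Eoverlap. apply Rdiv_le_0_compat; nra.
  - rewrite Emass, Eoverlap. unfold Rdiv. rewrite <- Rmult_assoc.
    apply Rmult_le_compat_r; [apply Rlt_le, Rinv_0_lt_compat|]; lra.
  - rewrite Emass, Eint. unfold Rdiv. rewrite <- Rmult_assoc.
    apply Rmult_le_compat_r; [apply Rlt_le, Rinv_0_lt_compat|]; nra.
Qed.

Lemma linear_profile a b : a < b -> hat_profile (fun x => (x - a) / (b - a)) a b.
Proof.
  intros Hab.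
  assert (Emass : RInt (fun x => (x - a) / (b - a) * ((x - a) / (b - a))) a b = (b - a) / 3 :> R).
  { rewrite (RInt_antiderivative (fun x => (x - a) ^ 3 / (3 * (b - a) ^ 2))).
    - field. lra.
    - intros x. auto_derive; [pos_denominators|]. field. lra.
    - intros x. auto_derive. lra. }
  assert (Eoverlap : RInt (fun x => (x - a) / (b - a) * ((a + b - x - a) / (b - a))) a b
                     = (b - a) / 6 :> R).
  { rewrite (RInt_antiderivative (fun x => (x - a) ^ 2 * (3 * b - a - 2 * x) / (6 * (b - a) ^ 2))).
    - field. lra.
    - intros x. auto_derive; [pos_denominators|]. field. lra.
    - intros x. auto_derive. lra. }
  assert (Eint : RInt (fun x => (x - a) / (b - a)) a b = (b - a) / 2 :> R).
  { rewrite (RInt_antiderivative (fun x => (x - a) ^ 2 / (2 * (b - a)))).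
    - field. lra.
    - intros x. auto_derive; [lra|]. field. lra.
    - intros x. auto_derive. lra. }
  split.
  - apply continuous_of_derivable. intros x. auto_derive. lra.
  - unfold Rdiv. ring.
  - field. lra.
  - intros x Hx. split.
    + apply Rdiv_le_0_compat; lra.
    + replace ((x - a) / (b - a) + (a + b - x - a) / (b - a)) with 1 by (field; lra). lra.
  - rewrite Emass. lra.
  - rewrite Eoverlap. lra.
  - rewrite Emass, Eoverlap. lra.
  - rewrite Emass, Eint. lra.
Qed.

(* The rising branch of the generalized hat on [a, b] and the oddness of Phi
   in its second argument, which makes the falling branch its mirror image. *)
Definition rise (xi a b x : R) : R := Phi xi (x - a) / Phi xi (b - a).

Lemma Phi_odd xi z : Phi xi (- z) = - Phi xi z.
Proof.
  unfold Phi. destruct (Req_EM_T xi 0); [reflexivity|].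
  replace (xi * - z) with (- (xi * z)) by ring. rewrite sinh_opp. field; auto.
Qed.

Lemma fall_is_reflected_rise xi a b x :
  Phi xi (x - b) / Phi xi (a - b) = rise xi a b (a + b - x).
Proof.
  unfold rise. replace (x - b) with (- (a + b - x - a)) by ring.
  replace (a - b) with (- (b - a)) by ring. rewrite !Phi_odd.
  unfold Rdiv. rewrite Rinv_opp. ring.
Qed.

Lemma Phi_abs xi z : Phi xi z = Phi (Rabs xi) z.
Proof.
  unfold Phi. destruct (Req_EM_T xi 0) as [->|Hxi].
  - rewrite Rabs_R0. destruct (Req_EM_T 0 0); [reflexivity | lra].
  - destruct (Req_EM_T (Rabs xi) 0) as [H|_]; [apply Rabs_eq_0 in H; lra|].
    unfold Rabs. destruct (Rcase_abs xi); [|reflexivity].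
    replace (- xi * z) with (- (xi * z)) by ring. rewrite sinh_opp. field. auto.
Qed.

Lemma rise_profile xi a b : a < b -> hat_profile (rise xi a b) a b.
Proof.
  intros Hab.
  replace (rise xi a b) with (rise (Rabs xi) a b)
    by (extensionality x; unfold rise; rewrite <- !Phi_abs; reflexivity).
  assert (Hz := Rabs_pos xi). set (z := Rabs xi) in *. clearbody z.
  unfold rise, Phi. destruct (Req_EM_T z 0) as [_|Hz0].
  - apply linear_profile, Hab.
  - replace (fun x => sinh (z * (x - a)) / z / (sinh (z * (b - a)) / z))
      with (fun x => sinh (z * (x - a)) / sinh (z * (b - a))).
    + apply sinh_profile; lra.
    + extensionality x.
      assert (0 < sinh (z * (b - a))) by (rewrite <- sinh_0; apply sinh_lt; nra).
      field. lra.
Qed.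

Lemma max_abs_index (a : nat -> R) N : (1 <= N)%nat ->
  exists j, (1 <= j <= N)%nat /\ forall k, (1 <= k <= N)%nat -> Rabs (a k) <= Rabs (a j).
Proof.
  induction N as [|N IH]; intros HN; [lia|].
  destruct (Nat.eq_dec N 0) as [->|HN0].
  - exists 1%nat. split; [lia|]. intros k Hk. replace k with 1%nat by lia. lra.
  - destruct IH as [j [Hj Hmax]]; [lia|].
    destruct (Rle_dec (Rabs (a (S N))) (Rabs (a j))).
    + exists j. split; [lia|]. intros k Hk.
      destruct (Nat.eq_dec k (S N)) as [->|]; [lra | apply Hmax; lia].
    + exists (S N). split; [lia|]. intros k Hk.
      destruct (Nat.eq_dec k (S N)) as [->|]; [lra|].
      assert (Rabs (a k) <= Rabs (a j)) by (apply Hmax; lia). lra.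
Qed.

Section Tridiagonal.
Variables (N : nat) (l d r : nat -> R).
Hypothesis dominant : forall j, (1 <= j <= N)%nat ->
  0 < d j /\ 0 <= l j /\ 0 <= r j /\ 2 * (l j + r j) <= d j.
Hypothesis l_first : l 1%nat = 0.

Definition tridiagonal_row (a : nat -> R) (j : nat) : R :=
  l j * a (j - 1)%nat + d j * a j + r j * a (S j).

Section Elimination.
Variable rhs : nat -> R.

Fixpoint pivots (k : nat) : R * R :=
  match k with
  | O => (1, 0)
  | S k' => (d (S k') - l (S k') * r k' / fst (pivots k'),
             rhs (S k') - l (S k') * snd (pivots k') / fst (pivots k'))
  end.
Definition pivot (k : nat) : R := fst (pivots k).
Definition reduced_rhs (k : nat) : R := snd (pivots k).

Fixpoint back_substitution (m : nat) : R :=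
  match m with
  | O => 0
  | S m' => (reduced_rhs (N - m') - r (N - m') * back_substitution m') / pivot (N - m')
  end.
Definition solution (j : nat) : R := back_substitution (N + 1 - j).

Lemma pivot_lower_bound j : (1 <= j <= N)%nat -> d j - l j <= pivot j.
Proof.
  induction j as [|j IH]; intros Hj; [lia|].
  unfold pivot; simpl. fold (pivot j).
  destruct (Nat.eq_dec j 0) as [->|Hj0].
  - rewrite l_first. unfold pivot; simpl. destruct (dominant 1) as (?&?&?&?); [lia|].
    rewrite l_first in *. lra.
  - assert (Hw := IH ltac:(lia)).
    destruct (dominant j) as (?&?&?&?); [lia|].
    destruct (dominant (S j)) as (?&?&?&?); [lia|].
    assert (0 < pivot j) by lra.
    assert (r j / pivot j <= 1) by (apply Rle_div_l; lra).
    assert (0 <= r j / pivot j) by (apply Rdiv_le_0_compat; lra).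
    assert (l (S j) * (r j / pivot j) <= l (S j)) by nra.
    unfold Rdiv in *. lra.
Qed.

Lemma pivot_pos j : (1 <= j <= N)%nat -> 0 < pivot j.
Proof.
  intros Hj. pose proof (pivot_lower_bound j Hj). destruct (dominant j) as (?&?&?&?); auto. lra.
Qed.

Lemma solution_step j : (j <= N)%nat -> solution j = (reduced_rhs j - r j * solution (S j)) / pivot j.
Proof.
  intros Hj. unfold solution. replace (N + 1 - j)%nat with (S (N - j)) by lia. simpl.
  replace (N - (N - j))%nat with j by lia. replace (N + 1 - S j)%nat with (N - j)%nat by lia.
  reflexivity.
Qed.

Lemma solution_solves j : (1 <= j <= N)%nat -> tridiagonal_row solution j = rhs j.
Proof.
  intros Hj. unfold tridiagonal_row.
  assert (Hwj := pivot_pos j Hj).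
  rewrite (solution_step j) by lia.
  destruct (Nat.eq_dec j 1) as [->|Hj1].
  - rewrite l_first. unfold pivot, reduced_rhs; simpl. rewrite l_first. field.
    unfold pivot in Hwj; simpl in Hwj; rewrite l_first in Hwj. lra.
  - assert (Hw1 := pivot_pos (j - 1) ltac:(lia)).
    rewrite (solution_step (j - 1)) by lia. replace (S (j - 1)) with j by lia.
    rewrite (solution_step j) by lia.
    assert (Ew : pivot j = d j - l j * r (j - 1) / pivot (j - 1)).
    { unfold pivot at 1. replace j with (S (j - 1)) at 1 by lia. simpl.
      replace (S (j - 1)) with j by lia. reflexivity. }
    assert (Ez : reduced_rhs j = rhs j - l j * reduced_rhs (j - 1) / pivot (j - 1)).
    { unfold reduced_rhs at 1. replace j with (S (j - 1)) at 1 by lia. simpl.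
      replace (S (j - 1)) with j by lia. reflexivity. }
    rewrite Ez, Ew. rewrite Ew in Hwj.
    assert (Hdet : 0 < d j * pivot (j - 1) - l j * r (j - 1)).
    { replace (d j * pivot (j - 1) - l j * r (j - 1))
        with ((d j - l j * r (j - 1) / pivot (j - 1)) * pivot (j - 1)) by (field; lra).
      apply Rmult_lt_0_compat; lra. }
    field. split; apply Rgt_not_eq; lra.
Qed.

End Elimination.

Lemma tridiagonal_solvable (rhs : nat -> R) :
  exists a, forall j, (1 <= j <= N)%nat -> tridiagonal_row a j = rhs j.
Proof. exists (solution rhs). apply solution_solves. Qed.

(* Maximum principle: if |rhs j| <= B d j in every row, then every unknown
   is bounded by 2 B, since the largest one dominates its own row. *)
Lemma tridiagonal_max_bound (a rhs : nat -> R) B : (1 <= N)%nat -> r N = 0 ->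
  (forall j, (1 <= j <= N)%nat -> tridiagonal_row a j = rhs j) ->
  (forall j, (1 <= j <= N)%nat -> Rabs (rhs j) <= B * d j) ->
  forall i, (1 <= i <= N)%nat -> Rabs (a i) <= 2 * B.
Proof.
  intros HN r_last Ha Hrhs i Hi.
  destruct (max_abs_index a N HN) as [j [Hj Hmax]].
  enough (Rabs (a j) <= 2 * B) by (pose proof (Hmax i Hi); lra).
  destruct (dominant j Hj) as (Hd&Hl&Hr&Hdom).
  assert (Hleft : l j * Rabs (a (j - 1)%nat) <= l j * Rabs (a j)).
  { destruct (Nat.eq_dec j 1) as [->|]; [rewrite l_first; lra|].
    apply Rmult_le_compat_l; [lra | apply Hmax; lia]. }
  assert (Hright : r j * Rabs (a (S j)) <= r j * Rabs (a j)).
  { destruct (Nat.eq_dec j N) as [->|]; [rewrite r_last; lra|].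
    apply Rmult_le_compat_l; [lra | apply Hmax; lia]. }
  assert (Hrow : d j * Rabs (a j)
                 <= Rabs (rhs j) + l j * Rabs (a (j - 1)%nat) + r j * Rabs (a (S j))).
  { assert (E : d j * a j = rhs j - l j * a (j - 1)%nat - r j * a (S j))
      by (rewrite <- (Ha j Hj); unfold tridiagonal_row; ring).
    rewrite <- (Rabs_pos_eq (d j)), <- (Rabs_pos_eq (l j)), <- (Rabs_pos_eq (r j)) by lra.
    rewrite <- !Rabs_mult, E.
    pose proof (Rabs_triang (rhs j - l j * a (j - 1)%nat) (- (r j * a (S j)))).
    pose proof (Rabs_triang (rhs j) (- (l j * a (j - 1)%nat))).
    rewrite !Rabs_Ropp in *. unfold Rminus in *. lra. }
  assert (Hm := Rabs_pos (a j)). pose proof (Hrhs j Hj).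
  apply (Rmult_le_reg_l (d j)); [lra|]. nra.
Qed.

End Tridiagonal.

Lemma sum_n_m_zero_terms (G : nat -> R) m p :
  (forall i, (m <= i <= p)%nat -> G i = 0) -> sum_n_m G m p = 0.
Proof.
  intros HG. rewrite (sum_n_m_ext_loc G (fun _ => zero)) by (intros; apply HG; auto).
  exact (sum_n_m_const_zero (G := R_AbelianMonoid) m p).
Qed.

Lemma sum_n_m_two_terms (G : nat -> R) k N : (1 <= k)%nat -> (k < N)%nat ->
  (forall i, (1 <= i <= N)%nat -> i <> k -> i <> S k -> G i = 0) ->
  sum_n_m G 1 N = G k + G (S k).
Proof.
  intros Hk HkN HG.
  rewrite (sum_n_m_Chasles G 1 (k - 1) N) by lia. replace (S (k - 1)) with k by lia.
  rewrite (sum_n_m_Chasles G k k N), (sum_n_m_Chasles G (S k) (S k) N) by lia.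
  rewrite !sum_n_n.
  rewrite !sum_n_m_zero_terms by (intros; apply HG; lia).
  unfold plus, zero; simpl. ring.
Qed.

Lemma RInt_agree (F H : R -> R) c e : c <= e -> (forall x, continuous H x) ->
  (forall x, c < x < e -> F x = H x) ->
  ex_RInt F c e /\ RInt F c e = RInt H c e :> R.
Proof.
  intros Hce HH HFH.
  assert (Hin : forall x, Rmin c e < x < Rmax c e -> H x = F x)
    by (rewrite Rmin_left, Rmax_right by lra; intros; symmetry; auto).
  split.
  - apply (ex_RInt_ext H); auto. apply ex_RInt_cont, HH.
  - symmetry. apply RInt_ext. auto.
Qed.

(* Extending a function continuous on [a, b] by constants outside gives a
   function continuous everywhere, to which the integration lemmas apply. *)
Definition clamp (a b x : R) : R := Rmax a (Rmin x b).

Lemma clamp_in a b x : a <= b -> a <= clamp a b x <= b.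
Proof. intros Hab. unfold clamp, Rmax, Rmin. repeat destruct Rle_dec; lra. Qed.

Lemma clamp_id a b x : a <= x <= b -> clamp a b x = x.
Proof. intros Hx. unfold clamp. rewrite Rmin_left, Rmax_right by lra. reflexivity. Qed.

Lemma clamp_lipschitz a b x y : a <= b -> Rabs (clamp a b x - clamp a b y) <= Rabs (x - y).
Proof.
  intros Hab. unfold clamp, Rmax, Rmin. repeat destruct Rle_dec;
  unfold Rabs; repeat destruct Rcase_abs; lra.
Qed.

Lemma continuous_clamped a b (f : R -> R) : a <= b -> cont_on a b f ->
  forall x, continuous (fun x => f (clamp a b x)) x.
Proof.
  intros Hab Hf x.
  apply (filterlim_comp _ _ _ (clamp a b) f _ (within (fun y => a <= y <= b) (locally (clamp a b x)))).
  - intros P HP.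
    assert (Hc : filterlim (clamp a b) (locally x) (locally (clamp a b x))).
    { apply filterlim_locally. intros eps. exists eps. intros y Hy.
      unfold ball in *; simpl in *; unfold AbsRing_ball, abs, minus, plus, opp in *; simpl in *.
      pose proof (clamp_lipschitz a b y x Hab). unfold Rminus in *. lra. }
    specialize (Hc _ HP). unfold filtermap in *.
    eapply filter_imp; [|exact Hc]. intros y Hy. apply Hy, clamp_in, Hab.
  - apply Hf, clamp_in, Hab.
Qed.

Lemma RInt_weighted_bound (F W : R -> R) M c e : c <= e ->
  (forall x, continuous F x) -> (forall x, continuous W x) ->
  (forall x, c <= x <= e -> 0 <= W x /\ Rabs (F x) <= M) ->
  Rabs (RInt (fun x => F x * W x) c e) <= M * RInt W c e.
Proof.
  intros Hce HF HW Hb.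
  assert (HFW := ex_RInt_cont _ c e (continuous_product F W HF HW)).
  assert (HMW : forall s, ex_RInt (fun x => s * W x) c e).
  { intros s. apply ex_RInt_cont, (continuous_product (fun _ => s) W); auto.
    intros; apply continuous_const. }
  apply Rabs_le. split.
  - rewrite Ropp_mult_distr_l, <- RInt_scale by auto.
    apply RInt_le; auto. intros x Hx.
    destruct (Hb x ltac:(lra)) as [HWx HFx]. apply Rabs_le_between in HFx. nra.
  - rewrite <- RInt_scale by auto.
    apply RInt_le; auto. intros x Hx.
    destruct (Hb x ltac:(lra)) as [HWx HFx]. apply Rabs_le_between in HFx. nra.
Qed.

Lemma RInt_combination (p q r s : R -> R) al be a b :
  (forall x, continuous p x) -> (forall x, continuous q x) ->
  (forall x, continuous r x) -> (forall x, continuous s x) ->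
  RInt (fun x => (p x - (al * q x + be * r x)) * s x) a b
  = RInt (fun x => p x * s x) a b - al * RInt (fun x => q x * s x) a b
    - be * RInt (fun x => r x * s x) a b :> R.
Proof.
  intros Hp Hq Hr Hs.
  assert (Ip := ex_RInt_cont _ a b (continuous_product p s Hp Hs)).
  assert (Iq := ex_RInt_cont _ a b (continuous_product q s Hq Hs)).
  assert (Ir := ex_RInt_cont _ a b (continuous_product r s Hr Hs)).
  assert (Iq' : ex_RInt (fun x => al * (q x * s x)) a b) by exact (ex_RInt_scal _ a b al Iq).
  assert (Ir' : ex_RInt (fun x => be * (r x * s x)) a b) by exact (ex_RInt_scal _ a b be Ir).
  assert (Eminus : RInt (fun x => p x * s x - (al * (q x * s x) + be * (r x * s x))) a b
                   = RInt (fun x => p x * s x) a b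
                     - RInt (fun x => al * (q x * s x) + be * (r x * s x)) a b :> R)
    by exact (RInt_minus _ _ a b Ip (ex_RInt_plus _ _ a b Iq' Ir')).
  assert (Eplus : RInt (fun x => al * (q x * s x) + be * (r x * s x)) a b
                  = RInt (fun x => al * (q x * s x)) a b + RInt (fun x => be * (r x * s x)) a b :> R)
    by exact (RInt_plus _ _ a b Iq' Ir').
  rewrite (RInt_ext_eq _ (fun x => p x * s x - (al * (q x * s x) + be * (r x * s x)))) by (intros; ring).
  rewrite Eminus, Eplus, !RInt_scale by (apply continuous_product; auto). ring.
Qed.

Section Hats.
Variables (n : nat) (t xi : nat -> R).
Hypothesis hn : (3 <= n)%nat.
Hypothesis ht : forall i : nat, (1 <= i)%nat -> (i < n)%nat -> t i < t (S i).

Lemma knots_lt i k : (1 <= i)%nat -> (i < k)%nat -> (k <= n)%nat -> t i < t k.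
Proof.
  intros Hi. induction k as [|k IH]; intros Hk Hkn; [lia|].
  destruct (Nat.eq_dec i k) as [->|Hne]; [apply ht; lia|].
  assert (t i < t k) by (apply IH; lia). assert (t k < t (S k)) by (apply ht; lia). lra.
Qed.

Lemma knots_le i k : (1 <= i)%nat -> (i <= k)%nat -> (k <= n)%nat -> t i <= t k.
Proof.
  intros Hi Hik Hkn. destruct (Nat.eq_dec i k) as [->|]; [lra | apply Rlt_le, knots_lt; lia].
Qed.

(* On the k-th piece [t k, t (k+1)] the only hats that do not vanish are
   H (k+1), which rises as up k, and H k, which falls as the mirror image of up k. *)
Definition up (k : nat) : R -> R := rise (xi k) (t k) (t (S k)).
Definition down (k : nat) (x : R) : R := up k (t k + t (S k) - x).

Lemma up_profile k : (1 <= k)%nat -> (k < n)%nat -> hat_profile (up k) (t k) (t (S k)).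
Proof. intros Hk Hkn. apply rise_profile, ht; lia. Qed.

Ltac case_conditions :=
  repeat match goal with
  | |- context [Rle_dec ?a ?b] => destruct (Rle_dec a b)
  | |- context [Nat.leb ?a ?b] => destruct (Nat.leb_spec a b)
  end; simpl.

Lemma hat_unfold i x : hat n t xi i x =
  if andb (Nat.leb 2 i) (andb (if Rle_dec (t (i - 1)) x then true else false)
                              (if Rle_dec x (t i) then true else false))
  then up (i - 1) x
  else if andb (Nat.leb (S i) n) (andb (if Rle_dec (t i) x then true else false)
                                       (if Rle_dec x (t (S i)) then true else false))
  then down i x else 0.
Proof.
  unfold hat, down, up. rewrite (fall_is_reflected_rise (xi i) (t i) (t (S i)) x).
  destruct (Nat.leb_spec 2 i); [|reflexivity]. simpl.
  replace (S (i - 1)) with i by lia. reflexivity.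
Qed.

Lemma down_left k : (1 <= k)%nat -> (k < n)%nat -> down k (t k) = 1.
Proof.
  intros Hk Hkn. unfold down. replace (t k + t (S k) - t k) with (t (S k)) by ring.
  apply (profile_right _ _ _ (up_profile k Hk Hkn)).
Qed.

Lemma down_right k : (1 <= k)%nat -> (k < n)%nat -> down k (t (S k)) = 0.
Proof.
  intros Hk Hkn. unfold down. replace (t k + t (S k) - t (S k)) with (t k) by ring.
  apply (profile_left _ _ _ (up_profile k Hk Hkn)).
Qed.

Lemma hat_on_piece k i x : (1 <= k)%nat -> (k < n)%nat -> t k <= x <= t (S k) ->
  (1 <= i <= n)%nat ->
  hat n t xi i x = if Nat.eqb i k then down k x else if Nat.eqb i (S k) then up k x else 0.
Proof.
  intros Hk Hkn Hx Hi. rewrite hat_unfold.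
  destruct (Nat.eqb_spec i k) as [->|Hik]; [|destruct (Nat.eqb_spec i (S k)) as [->|HiSk]].
  - (* H k: the rising branch can only meet the piece at x = t k, where both equal 1 *)
    case_conditions; try lia; try lra; try reflexivity.
    assert (x = t k) by lra. subst x.
    rewrite down_left by lia.
    pose proof (profile_right _ _ _ (up_profile (k - 1) ltac:(lia) ltac:(lia))) as E.
    replace (S (k - 1)) with k in E by lia. exact E.
  -
    replace (S k - 1)%nat with k by lia. case_conditions; try lia; try lra; reflexivity.
  - (* the other hats vanish on the piece, except possibly at an endpoint, where they are 0 *)
    destruct (Nat.lt_ge_cases i k) as [Hlt|Hge].
    + assert (t i < t k) by (apply knots_lt; lia).
      case_conditions; try lia; try lra; try reflexivity.
      all: assert (HSi : S i = k) by (destruct (Nat.eq_dec (S i) k); auto;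
                                      assert (t (S i) < t k) by (apply knots_lt; lia); lra).
      all: subst k; assert (x = t (S i)) by lra; subst x; apply down_right; lia.
    + assert (t (S k) < t i) by (apply knots_lt; lia).
      case_conditions; try lia; try lra; try reflexivity.
      all: assert (Hi1 : (i - 1 = S k)%nat) by (destruct (Nat.eq_dec (i - 1) (S k)); auto;
                                        assert (t (S k) < t (i - 1)) by (apply knots_lt; lia); lra).
      all: rewrite Hi1 in *; assert (x = t (S k)) by lra; subst x.
      all: apply (profile_left _ _ _ (up_profile (S k) ltac:(lia) ltac:(lia))).
Qed.

Lemma hat_zero_left j x : (2 <= j <= n)%nat -> x < t (j - 1) -> hat n t xi j x = 0.
Proof.
  intros Hj Hx. assert (t (j - 1) < t j) by (apply knots_lt; lia).
  rewrite hat_unfold. case_conditions; try lra; lia.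
Qed.

Lemma hat_zero_right j x : (1 <= j < n)%nat -> t (S j) < x -> hat n t xi j x = 0.
Proof.
  intros Hj Hx. assert (t j < t (S j)) by (apply ht; lia).
  rewrite hat_unfold. case_conditions; try lra; lia.
Qed.

Lemma continuous_up k : (1 <= k)%nat -> (k < n)%nat -> forall x, continuous (up k) x.
Proof. intros Hk Hkn. apply (profile_continuous _ _ _ (up_profile k Hk Hkn)). Qed.

Lemma continuous_down k : (1 <= k)%nat -> (k < n)%nat -> forall x, continuous (down k) x.
Proof.
  intros Hk Hkn x. unfold down.
  apply (continuous_ext (fun x => up k (-1 * x + (t k + t (S k))))).
  - intros y. f_equal. ring.
  - apply continuous_affine_comp, continuous_up; auto.
Qed.

Lemma hat_rising j x : (2 <= j <= n)%nat -> t (j - 1) <= x <= t j -> hat n t xi j x = up (j - 1) x.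
Proof.
  intros Hj Hx.
  rewrite (hat_on_piece (j - 1) j x) by (try lia; replace (S (j - 1)) with j by lia; lra).
  destruct (Nat.eqb_spec j (j - 1)); [lia|].
  destruct (Nat.eqb_spec j (S (j - 1))); [reflexivity | lia].
Qed.

Lemma hat_falling j x : (1 <= j < n)%nat -> t j <= x <= t (S j) -> hat n t xi j x = down j x.
Proof.
  intros Hj Hx. rewrite (hat_on_piece j j x) by (lia || lra). rewrite Nat.eqb_refl. reflexivity.
Qed.

Lemma RInt_hat_left j (G GL : R -> R) : (1 <= j <= n)%nat ->
  ((2 <= j)%nat -> forall x, continuous GL x) ->
  ((2 <= j)%nat -> forall x, t (j - 1) < x < t j -> G x = GL x) ->
  ex_RInt (fun x => G x * hat n t xi j x) (t 1) (t j) /\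
  RInt (fun x => G x * hat n t xi j x) (t 1) (t j)
  = (if Nat.leb 2 j then RInt (fun x => GL x * up (j - 1) x) (t (j - 1)) (t j) else 0) :> R.
Proof.
  intros Hj HGL HG. destruct (Nat.leb_spec 2 j) as [H2|H2].
  - assert (Hpiece := RInt_agree (fun x => G x * hat n t xi j x) (fun x => GL x * up (j - 1) x)
                        (t (j - 1)) (t j)).
    destruct Hpiece as [Ip Ep].
    + apply Rlt_le, knots_lt; lia.
    + intros x. apply (continuous_mult GL (up (j - 1))); [apply HGL | apply continuous_up]; lia.
    + intros x Hx. rewrite HG, hat_rising by (auto || lia || lra). reflexivity.
    + assert (Hzero := RInt_agree (fun x => G x * hat n t xi j x) (fun _ => 0) (t 1) (t (j - 1))).
      destruct Hzero as [Iz Ez].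
      * apply knots_le; lia.
      * intros; apply continuous_const.
      * intros x Hx. rewrite hat_zero_left by (lia || lra). ring.
      * split; [apply (ex_RInt_Chasles _ _ (t (j - 1))); auto|].
        rewrite <- (RInt_Chasles _ _ (t (j - 1))) by auto.
        rewrite Ez, Ep, RInt_const. unfold plus, scal; simpl. unfold mult; simpl. ring.
  - replace j with 1%nat by lia. split; [apply ex_RInt_point | apply (RInt_point (V := R_CompleteNormedModule))].
Qed.

Lemma RInt_hat_right j (G GR : R -> R) : (1 <= j <= n)%nat ->
  ((j < n)%nat -> forall x, continuous GR x) ->
  ((j < n)%nat -> forall x, t j < x < t (S j) -> G x = GR x) ->
  ex_RInt (fun x => G x * hat n t xi j x) (t j) (t n) /\
  RInt (fun x => G x * hat n t xi j x) (t j) (t n)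
  = (if Nat.ltb j n then RInt (fun x => GR x * down j x) (t j) (t (S j)) else 0) :> R.
Proof.
  intros Hj HGR HG. destruct (Nat.ltb_spec j n) as [Hn|Hn].
  - assert (Hpiece := RInt_agree (fun x => G x * hat n t xi j x) (fun x => GR x * down j x)
                        (t j) (t (S j))).
    destruct Hpiece as [Ip Ep].
    + apply Rlt_le, ht; lia.
    + intros x. apply (continuous_mult GR (down j)); [apply HGR | apply continuous_down]; lia.
    + intros x Hx. rewrite HG, hat_falling by (auto || lia || lra). reflexivity.
    + assert (Hzero := RInt_agree (fun x => G x * hat n t xi j x) (fun _ => 0) (t (S j)) (t n)).
      destruct Hzero as [Iz Ez].
      * apply knots_le; lia.
      * intros; apply continuous_const.
      * intros x Hx. rewrite hat_zero_right by (lia || lra). ring.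
      * split; [apply (ex_RInt_Chasles _ _ (t (S j))); auto|].
        rewrite <- (RInt_Chasles _ _ (t (S j))) by auto.
        rewrite Ez, Ep, RInt_const. unfold plus, scal; simpl. unfold mult; simpl. ring.
  - replace j with n by lia. split; [apply ex_RInt_point | apply (RInt_point (V := R_CompleteNormedModule))].
Qed.

Lemma RInt_against_hat j (G GL GR : R -> R) : (1 <= j <= n)%nat ->
  ((2 <= j)%nat -> forall x, continuous GL x) ->
  ((j < n)%nat -> forall x, continuous GR x) ->
  ((2 <= j)%nat -> forall x, t (j - 1) < x < t j -> G x = GL x) ->
  ((j < n)%nat -> forall x, t j < x < t (S j) -> G x = GR x) ->
  RInt (fun x => G x * hat n t xi j x) (t 1) (t n)
  = (if Nat.leb 2 j then RInt (fun x => GL x * up (j - 1) x) (t (j - 1)) (t j) else 0)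
    + (if Nat.ltb j n then RInt (fun x => GR x * down j x) (t j) (t (S j)) else 0) :> R.
Proof.
  intros Hj HGL HGR HL HR.
  destruct (RInt_hat_left j G GL Hj HGL HL) as [IL EL].
  destruct (RInt_hat_right j G GR Hj HGR HR) as [IR ER].
  rewrite <- (RInt_Chasles _ _ (t j)) by auto. rewrite EL, ER. reflexivity.
Qed.

(* The Gram matrix is tridiagonal; its entries are expressed through the
   mass and the overlap of the rising profile on each piece. *)
Definition mass (k : nat) : R := RInt (fun x => up k x * up k x) (t k) (t (S k)).
Definition overlap (k : nat) : R := RInt (fun x => up k x * down k x) (t k) (t (S k)).
Definition diag (j : nat) : R :=
  (if Nat.leb 2 j then mass (j - 1) else 0) + (if Nat.ltb j n then mass j else 0).
Definition lower (j : nat) : R := if Nat.leb 2 j then overlap (j - 1) else 0.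
Definition upper (j : nat) : R := if Nat.ltb j n then overlap j else 0.

(* By mirror symmetry the falling half has the same mass and integral. *)
Lemma mass_down k : (1 <= k)%nat -> (k < n)%nat ->
  RInt (fun x => down k x * down k x) (t k) (t (S k)) = mass k.
Proof.
  intros Hk Hkn. apply (RInt_reflect (fun x => up k x * up k x)).
  intros x. apply (continuous_mult (up k) (up k)); apply continuous_up; auto.
Qed.

Lemma integral_down k : (1 <= k)%nat -> (k < n)%nat ->
  RInt (down k) (t k) (t (S k)) = RInt (up k) (t k) (t (S k)).
Proof. intros Hk Hkn. apply RInt_reflect, continuous_up; auto. Qed.

Lemma overlap_sym k :
  RInt (fun x => down k x * up k x) (t k) (t (S k)) = overlap k :> R.
Proof. apply RInt_ext_eq. intros; apply Rmult_comm. Qed.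

Lemma rows_dominant j : (1 <= j <= n)%nat ->
  0 < diag j /\ 0 <= lower j /\ 0 <= upper j /\ 2 * (lower j + upper j) <= diag j.
Proof.
  intros Hj. unfold diag, lower, upper.
  assert (P : forall k, (1 <= k)%nat -> (k < n)%nat ->
            0 < mass k /\ 0 <= overlap k /\ 2 * overlap k <= mass k).
  { intros k Hk Hkn. destruct (up_profile k Hk Hkn). unfold mass, overlap, down. auto. }
  destruct (Nat.leb_spec 2 j); destruct (Nat.ltb_spec j n); try lia.
  - destruct (P (j - 1)%nat) as (?&?&?); try lia. destruct (P j) as (?&?&?); try lia. lra.
  - destruct (P (j - 1)%nat) as (?&?&?); try lia. lra.
  - destruct (P j) as (?&?&?); try lia. lra.
Qed.

Lemma gram_diag j : (1 <= j <= n)%nat -> gram n t xi j j = diag j.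
Proof.
  intros Hj. unfold gram.
  rewrite (RInt_against_hat j (hat n t xi j) (up (j - 1)) (down j)); try lia.
  - unfold diag, mass. destruct (Nat.leb_spec 2 j); destruct (Nat.ltb_spec j n); try lia;
      rewrite ?mass_down by lia; replace (S (j - 1)) with j by lia; reflexivity.
  - intros; apply continuous_up; lia.
  - intros; apply continuous_down; lia.
  - intros; apply hat_rising; (lia || lra).
  - intros; apply hat_falling; (lia || lra).
Qed.

Lemma RInt_zero_integrand (h : R -> R) a b : RInt (fun x => 0 * h x) a b = 0 :> R.
Proof.
  rewrite (RInt_ext_eq _ (fun _ => 0)) by (intros; ring).
  rewrite RInt_const. unfold scal; simpl. unfold mult; simpl. ring.
Qed.

Lemma gram_lower j : (2 <= j <= n)%nat -> gram n t xi (j - 1) j = lower j.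
Proof.
  intros Hj. unfold gram.
  rewrite (RInt_against_hat j (hat n t xi (j - 1)) (down (j - 1)) (fun _ => 0)); try lia.
  - unfold lower. destruct (Nat.leb_spec 2 j); [|lia].
    rewrite <- overlap_sym. replace (S (j - 1)) with j by lia.
    destruct (Nat.ltb_spec j n); rewrite ?RInt_zero_integrand; ring.
  - intros; apply continuous_down; lia.
  - intros; apply continuous_const.
  - intros H2 x Hx. apply hat_falling; (lia || (replace (S (j - 1)) with j by lia; lra)).
  - intros Hjn x Hx. rewrite (hat_on_piece j (j - 1) x) by (lia || lra).
    destruct (Nat.eqb_spec (j - 1) j); [lia|]. destruct (Nat.eqb_spec (j - 1) (S j)); [lia|].
    reflexivity.
Qed.

Lemma gram_upper j : (1 <= j < n)%nat -> gram n t xi j (S j) = upper j.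
Proof.
  intros Hj. unfold gram.
  rewrite (RInt_against_hat (S j) (hat n t xi j) (down j) (fun _ => 0)); try lia.
  - unfold upper. destruct (Nat.leb_spec 2 (S j)); [|lia].
    destruct (Nat.ltb_spec j n); [|lia].
    replace (S j - 1)%nat with j by lia. rewrite <- overlap_sym.
    destruct (Nat.ltb_spec (S j) n); rewrite ?RInt_zero_integrand; ring.
  - intros; replace (S j - 1)%nat with j by lia. apply continuous_down; lia.
  - intros; apply continuous_const.
  - intros H2 x Hx. replace (S j - 1)%nat with j in Hx by lia. apply hat_falling; (lia || lra).
  - intros HSjn x Hx. rewrite (hat_on_piece (S j) j x) by (lia || lra).
    destruct (Nat.eqb_spec j (S j)); [lia|]. destruct (Nat.eqb_spec j (S (S j))); [lia|].
    reflexivity.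
Qed.

Lemma gram_row_diag_dominant : row_diag_dominant n (gram n t xi).
Proof.
  exists (1 / 2). split; [lra|].
  intros j Hj. rewrite gram_diag by auto.
  destruct (rows_dominant j Hj) as (Hd&Hl&Hu&Hdom).
  rewrite (Rabs_pos_eq (diag j)) by lra.
  destruct (Nat.eqb_spec j 1); destruct (Nat.eqb_spec j n); try lia.
  - subst j. rewrite gram_upper, Rabs_pos_eq by (lia || lra). unfold lower in Hdom. simpl in Hdom. lra.
  - subst j. rewrite gram_lower, Rabs_pos_eq by (lia || lra).
    unfold upper in Hdom. destruct (Nat.ltb_spec n n); [lia|]. lra.
  - rewrite gram_lower, gram_upper, !Rabs_pos_eq by (lia || lra). lra.
Qed.

Lemma up_down_bounds k x : (1 <= k)%nat -> (k < n)%nat -> t k <= x <= t (S k) ->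
  0 <= up k x /\ 0 <= down k x /\ up k x + down k x <= 1.
Proof.
  intros Hk Hkn Hx. destruct (up_profile k Hk Hkn) as [_ _ _ Hb _ _ _ _].
  destruct (Hb x Hx) as [Hu Hsum].
  destruct (Hb (t k + t (S k) - x)) as [Hd _]; [lra|].
  unfold down. auto.
Qed.

Lemma find_piece x : t 1 <= x <= t n ->
  exists k, (1 <= k)%nat /\ (k < n)%nat /\ t k <= x <= t (S k).
Proof.
  intros Hx.
  assert (Hsearch : forall m, (1 <= m)%nat -> (m < n)%nat -> x <= t (S m) ->
            exists k, (1 <= k)%nat /\ (k < n)%nat /\ t k <= x <= t (S k)).
  { induction m as [|m IH]; intros Hm1 Hmn Hxm; [lia|].
    destruct (Rle_dec x (t (S m))) as [Hl|Hl].
    - destruct (Nat.eq_dec m 0) as [->|Hm0].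
      + exists 1%nat. repeat split; lia || lra.
      + apply IH; lia || lra.
    - exists (S m). repeat split; lia || lra. }
  apply (Hsearch (n - 1)%nat); try lia. replace (S (n - 1)) with n by lia. lra.
Qed.

Lemma hat_combination_on_piece (a : nat -> R) k x : (1 <= k)%nat -> (k < n)%nat ->
  t k <= x <= t (S k) ->
  sum_n_m (fun i => a i * hat n t xi i x) 1 n = a k * down k x + a (S k) * up k x.
Proof.
  intros Hk Hkn Hx.
  assert (Hothers : forall i, (1 <= i <= n)%nat -> i <> k -> i <> S k -> a i * hat n t xi i x = 0).
  { intros i Hi Hik HiSk. rewrite (hat_on_piece k i x) by (lia || lra).
    destruct (Nat.eqb_spec i k); [lia|]. destruct (Nat.eqb_spec i (S k)); [lia|]. ring. }
  rewrite (sum_n_m_two_terms (fun i => a i * hat n t xi i x) k n) by (auto || lia).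
  rewrite hat_falling, hat_rising by (lia || (replace (S k - 1)%nat with k by lia; lra)).
  replace (S k - 1)%nat with k by lia. reflexivity.
Qed.

(* The data f enters the normal equations through its moments against the
   two halves of H j; f is extended continuously outside [t 1, t n]. *)
Definition extend (f : R -> R) (x : R) : R := f (clamp (t 1) (t n) x).

Definition moment (f : R -> R) (j : nat) : R :=
  (if Nat.leb 2 j then RInt (fun x => extend f x * up (j - 1) x) (t (j - 1)) (t j) else 0)
  + (if Nat.ltb j n then RInt (fun x => extend f x * down j x) (t j) (t (S j)) else 0).

Lemma first_lt_last : t 1 < t n.
Proof. apply knots_lt; lia. Qed.

Lemma continuous_extend f : cont_on (t 1) (t n) f -> forall x, continuous (extend f) x.
Proof. intros Hf. apply continuous_clamped; auto. apply Rlt_le, first_lt_last. Qed.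

Lemma continuous_piece_combination k (p : R -> R) al be : (1 <= k)%nat -> (k < n)%nat ->
  (forall x, continuous p x) ->
  forall x, continuous (fun x => p x - (al * down k x + be * up k x)) x.
Proof.
  intros Hk Hkn Hp x. apply (continuous_minus p); [auto|].
  apply (continuous_plus (fun x => al * down k x));
    apply (continuous_scal_r (K := R_AbsRing) (V := R_NormedModule));
    (apply continuous_up || apply continuous_down); auto.
Qed.

Lemma RInt_piece_up k (p : R -> R) al be : (1 <= k)%nat -> (k < n)%nat ->
  (forall x, continuous p x) ->
  RInt (fun x => (p x - (al * down k x + be * up k x)) * up k x) (t k) (t (S k))
  = RInt (fun x => p x * up k x) (t k) (t (S k)) - al * overlap k - be * mass k :> R.
Proof.
  intros Hk Hkn Hp.
  rewrite (RInt_combination p (down k) (up k) (up k) al be (t k) (t (S k)) Hp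
             (continuous_down k Hk Hkn) (continuous_up k Hk Hkn) (continuous_up k Hk Hkn)).
  rewrite overlap_sym. reflexivity.
Qed.

Lemma RInt_piece_down k (p : R -> R) al be : (1 <= k)%nat -> (k < n)%nat ->
  (forall x, continuous p x) ->
  RInt (fun x => (p x - (al * down k x + be * up k x)) * down k x) (t k) (t (S k))
  = RInt (fun x => p x * down k x) (t k) (t (S k)) - al * mass k - be * overlap k :> R.
Proof.
  intros Hk Hkn Hp.
  rewrite (RInt_combination p (down k) (up k) (down k) al be (t k) (t (S k)) Hp
             (continuous_down k Hk Hkn) (continuous_up k Hk Hkn) (continuous_down k Hk Hkn)).
  rewrite mass_down by auto. reflexivity.
Qed.

Lemma normal_equation (f : R -> R) (a : nat -> R) j : cont_on (t 1) (t n) f -> (1 <= j <= n)%nat ->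
  RInt (fun x => (f x - sum_n_m (fun i => a i * hat n t xi i x) 1 n) * hat n t xi j x) (t 1) (t n)
  = moment f j - tridiagonal_row lower diag upper a j :> R.
Proof.
  intros Hf Hj. assert (Hfc := continuous_extend f Hf). pose proof first_lt_last.
  rewrite (RInt_against_hat j _
             (fun x => extend f x - (a (j - 1)%nat * down (j - 1) x + a j * up (j - 1) x))
             (fun x => extend f x - (a j * down j x + a (S j) * up j x))); try lia.
  - unfold moment, tridiagonal_row, lower, diag, upper.
    assert (Hleft : (2 <= j)%nat ->
      RInt (fun x => (extend f x - (a (j - 1)%nat * down (j - 1) x + a j * up (j - 1) x))
                     * up (j - 1) x) (t (j - 1)) (t j)
      = RInt (fun x => extend f x * up (j - 1) x) (t (j - 1)) (t j)
        - a (j - 1)%nat * overlap (j - 1) - a j * mass (j - 1) :> R).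
    { intros H2. replace (t j) with (t (S (j - 1))) by (f_equal; lia).
      apply RInt_piece_up; auto; lia. }
    destruct (Nat.leb_spec 2 j); destruct (Nat.ltb_spec j n); try lia;
      rewrite ?Hleft, ?RInt_piece_down by (auto || lia); ring.
  - intros H2. apply continuous_piece_combination; auto; lia.
  - intros Hn. apply continuous_piece_combination; auto; lia.
  - intros H2 x Hx. assert (t 1 <= t (j - 1)) by (apply knots_le; lia).
    assert (t j <= t n) by (apply knots_le; lia).
    unfold extend. rewrite clamp_id by lra.
    rewrite (hat_combination_on_piece a (j - 1) x) by (try lia; replace (S (j - 1)) with j by lia; lra).
    replace (S (j - 1)) with j by lia. reflexivity.
  - intros Hn x Hx. assert (t 1 <= t j) by (apply knots_le; lia).
    assert (t (S j) <= t n) by (apply knots_le; lia).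
    unfold extend. rewrite clamp_id by lra.
    rewrite (hat_combination_on_piece a j x) by (lia || lra). reflexivity.
Qed.

(* |moment f j| <= 2 M diag j, because int up <= 2 mass on every piece. *)
Lemma moment_bound (f : R -> R) M j : cont_on (t 1) (t n) f -> 0 <= M ->
  (forall x, t 1 <= x <= t n -> Rabs (f x) <= M) -> (1 <= j <= n)%nat ->
  Rabs (moment f j) <= 2 * M * diag j.
Proof.
  intros Hf HM0 HM Hj. pose proof first_lt_last.
  assert (Hext : forall x, Rabs (extend f x) <= M) by (intros; apply HM, clamp_in; lra).
  assert (Hpiece : forall k (W : R -> R), (1 <= k)%nat -> (k < n)%nat ->
            (forall x, continuous W x) -> (forall x, t k <= x <= t (S k) -> 0 <= W x) ->
            RInt W (t k) (t (S k)) <= 2 * mass k ->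
            Rabs (RInt (fun x => extend f x * W x) (t k) (t (S k))) <= 2 * M * mass k).
  { intros k W Hk Hkn HW HW0 HWm.
    eapply Rle_trans; [apply RInt_weighted_bound|].
    - apply Rlt_le, ht; lia.
    - apply continuous_extend, Hf.
    - exact HW.
    - intros x Hx. split; auto.
    - nra. }
  unfold moment, diag. eapply Rle_trans; [apply Rabs_triang|].
  assert (Hleft : (2 <= j)%nat ->
    Rabs (RInt (fun x => extend f x * up (j - 1) x) (t (j - 1)) (t j)) <= 2 * M * mass (j - 1)).
  { intros H2. replace (t j) with (t (S (j - 1))) by (f_equal; lia).
    apply Hpiece; try lia.
    - apply continuous_up; lia.
    - intros x Hx. apply up_down_bounds; lia || lra.
    - apply (profile_integral _ _ _ (up_profile (j - 1) ltac:(lia) ltac:(lia))). }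
  assert (Hright : (j < n)%nat ->
    Rabs (RInt (fun x => extend f x * down j x) (t j) (t (S j))) <= 2 * M * mass j).
  { intros Hn. apply Hpiece; try lia.
    - apply continuous_down; lia.
    - intros x Hx. apply up_down_bounds; lia || lra.
    - rewrite integral_down by lia.
      apply (profile_integral _ _ _ (up_profile j ltac:(lia) ltac:(lia))). }
  destruct (Nat.leb_spec 2 j); destruct (Nat.ltb_spec j n); rewrite ?Rabs_R0;
    try specialize (Hleft ltac:(lia)); try specialize (Hright ltac:(lia)); lra.
Qed.

Lemma hat_projection_exists (f : R -> R) : cont_on (t 1) (t n) f ->
  exists g, is_hat_proj n t xi f g.
Proof.
  intros Hf.
  destruct (tridiagonal_solvable n lower diag upper rows_dominant eq_refl (moment f)) as [a Ha].
  exists (fun x => sum_n_m (fun i => a i * hat n t xi i x) 1 n). split.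
  - exists a. reflexivity.
  - intros i Hi. rewrite normal_equation, Ha by auto. apply Rminus_diag_eq. reflexivity.
Qed.

(* Second claim, bound: the coefficients of the projection are bounded by 4 M
   (maximum principle), and on each piece the projection is a convex-type
   combination of two consecutive coefficients. *)
Lemma hat_projection_bounded (f g : R -> R) M : cont_on (t 1) (t n) f ->
  is_hat_proj n t xi f g -> (forall x, t 1 <= x <= t n -> Rabs (f x) <= M) ->
  forall x, t 1 <= x <= t n -> Rabs (g x) <= 4 * M.
Proof.
  intros Hf [[a Hg] Horth] HM x Hx.
  assert (HM0 : 0 <= M).
  { pose proof first_lt_last. pose proof (HM (t 1) ltac:(lra)). pose proof (Rabs_pos (f (t 1))). lra. }
  assert (Hrows : forall j, (1 <= j <= n)%nat -> tridiagonal_row lower diag upper a j = moment f j).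
  { intros j Hj. pose proof (Horth j Hj) as E.
    rewrite (RInt_ext_eq _ (fun x => (f x - sum_n_m (fun i => a i * hat n t xi i x) 1 n)
                                      * hat n t xi j x)) in E by (intros; rewrite Hg; reflexivity).
    rewrite normal_equation in E by auto. lra. }
  assert (Hcoef : forall i, (1 <= i <= n)%nat -> Rabs (a i) <= 2 * (2 * M)).
  { apply (tridiagonal_max_bound n lower diag upper rows_dominant eq_refl a (moment f)); try lia.
    - unfold upper. destruct (Nat.ltb_spec n n); [lia | reflexivity].
    - exact Hrows.
    - intros j Hj. apply moment_bound; auto. }
  destruct (find_piece x Hx) as (k & Hk & Hkn & Hxk).
  destruct (up_down_bounds k x Hk Hkn Hxk) as (Hu & Hd & Hsum).
  rewrite Hg, (hat_combination_on_piece a k x) by auto.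
  assert (Hak := Hcoef k ltac:(lia)). assert (HaSk := Hcoef (S k) ltac:(lia)).
  eapply Rle_trans; [apply Rabs_triang|].
  rewrite !Rabs_mult, (Rabs_pos_eq (down k x)), (Rabs_pos_eq (up k x)) by lra.
  pose proof (Rabs_pos (a k)). pose proof (Rabs_pos (a (S k))). nra.
Qed.

End Hats.

Theorem mainTheorem16 (n : nat) (t xi : nat -> R)
  (hn : (3 <= n)%nat)
  (ht : forall i : nat, (1 <= i)%nat -> (i < n)%nat -> t i < t (S i)) :
  row_diag_dominant n (gram n t xi)
  /\ (forall f : R -> R, cont_on (t 1%nat) (t n) f ->
        (exists g, is_hat_proj n t xi f g)
        /\ forall g, is_hat_proj n t xi f g ->
             forall M : R, (forall x, t 1%nat <= x <= t n -> Rabs (f x) <= M) ->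
               forall x, t 1%nat <= x <= t n -> Rabs (g x) <= 4 * M).
Proof.
  split.
  - exact (gram_row_diag_dominant n t xi hn ht).
  - intros f Hf. split.
    + exact (hat_projection_exists n t xi hn ht f Hf).
    + intros g Hg M HM. exact (hat_projection_bounded n t xi hn ht f g M Hf Hg HM).
Qed.
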